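(* Let $\gamma,\varepsilon^*,C^*,\lambda_1,\lambda_2>0$, set $\check C_0=C^*+\varepsilon^*/2$ and $\tilde C_0=C^*+1$, and assume $\lambda_1h\le\Delta t\le\lambda_2h$. Let $\check\rho^n,\check\rho^{n+1},\rho^n,\rho^{n+1},\hat\rho^{n+\frac12}\in\mathcal C$ satisfy, pointwise and on all faces: (a) $\varepsilon^*\le\check\rho^k\le C^*$ and $\|\nabla_h\check\rho^k\|_\infty\le C^*$ for $k=n,n+1$; $\|\check\rho^{n+1}-\check\rho^n\|_\infty\le C^*\Delta t$, $\|\nabla_h(\check\rho^{n+1}-\check\rho^n)\|_\infty\le C^*\Delta t$; (b) $\varepsilon^*/2\le\rho^{n+1}\le\check C_0$, $\rho^n>0$, $\|\nabla_h\rho^k\|_\infty\le\tilde C_0$ for $k=n,n+1$, and $\|\rho^{n+1}-\rho^n\|_\infty\le\tilde C_0\Delta t$; (c) $\varepsilon^*/2\le\hat\rho^{n+\frac12}\le\check C_0$ and $\frac34\le\hat\rho^{n+\frac12}/\rho^{n+1}\le\frac54$. Let $\tilde\rho^k=\check\rho^k-\rho^k$ and $\tilde S^{n+\frac12}=\check S^{n+\frac12}-S^{n+\frac12}$ with $$\check S^{n+\frac12}=\ln\check\rho^{n+1}-\frac{\check\rho^{n+1}-\check\rho^n}{2\check\rho^{n+1}}-\frac{(\check\rho^{n+1}-\check\rho^n)^2}{6(\check\rho^{n+1})^2},\quad S^{n+\frac12}=\ln\rho^{n+1}-\frac{\rho^{n+1}-\rho^n}{2\rho^{n+1}}-\frac{(\rho^{n+1}-\rho^n)^2}{6(\rho^{n+1})^2}.$$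 Then there exist positive constants $\tilde C_1,M_1$ depending only on $\varepsilon^*,C^*,\gamma,\lambda_1,\lambda_2$ (and $|\Omega|$) such that, for $h$ sufficiently small, $$\gamma\big[\hat\rho^{n+\frac12}\nabla_h\tilde S^{n+\frac12},\nabla_h(\tilde\rho^{n+1}+\tilde\rho^n)\big]\ge\frac\gamma4\|\nabla_h(\tilde\rho^{n+1}+\tilde\rho^n)\|_2^2-\tilde C_1\big(\|\tilde\rho^{n+1}\|_2^2+\|\tilde\rho^n\|_2^2\big)-M_1h^8.$$
   Context: Grid setting: $\Omega=(a,b)^3$, $N\in\mathbb N$, $h=(b-a)/N$, cell centers $(a+(i-\tfrac12)h,a+(j-\tfrac12)h,a+(k-\tfrac12)h)$, $1\le i,j,k\le N$. $\mathcal C$ is the space of cell-centered grid functions extended to ghost points by the discrete homogeneous Neumann condition $u_{0,j,k}=u_{1,j,k}$, $u_{N+1,j,k}=u_{N,j,k}$ (likewise in $j,k$). $D_xf_{i+1/2,j,k}=(f_{i+1,j,k}-f_{i,j,k})/h$, $A_xf_{i+1/2,j,k}=(f_{i+1,j,k}+f_{i,j,k})/2$; for face-centered $g$, $a_xg_{i,j,k}=(g_{i+1/2,j,k}+g_{i-1/2,j,k})/2$; analogously in $y,z$; $\nabla_hf=(D_xf,D_yf,D_zf)$. $\langle f,g\rangle=h^3\sum_{i,j,k=1}^Nf_{i,j,k}g_{i,j,k}$, $\|f\|_2^2=\langle f,f\rangle$, $\|f\|_\infty=\max|f_{i,j,k}|$, $\|\nabla_hf\|_\infty$ is the maximum of $|D_xf|,|D_yf|,|D_zf|$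 over all faces. For face-centered vector fields $[\vec f,\vec g]=\langle a_x(f^xg^x)+a_y(f^yg^y)+a_z(f^zg^z),1\rangle$, $\|\nabla_hf\|_2^2=[\nabla_hf,\nabla_hf]$, and for cell-centered $\mathcal D$, $[\mathcal D\nabla_hf,\nabla_hg]:=[(A_x\mathcal D\,D_xf,A_y\mathcal D\,D_yf,A_z\mathcal D\,D_zf),\nabla_hg]$. Nonlinear functions are applied pointwise. *)

From Stdlib Require Import Reals Lra.
Open Scope R_scope.

(* Cell-centered grid function; cell (i,j,k) with 1 <= i,j,k <= N.
   Values outside 1..N are irrelevant: they are replaced by the
   discrete homogeneous Neumann extension [ext]. *)
Definition grid := nat -> nat -> nat -> R.

Definition hN (a b : R) (N : nat) : R := (b - a) / INR N.

(* ghost-point extension: index 0 -> 1, N+1 -> N *)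
Definition clamp (N i : nat) : nat := Nat.min (Nat.max i 1) N.
Definition ext (N : nat) (u : grid) : grid :=
  fun i j k => u (clamp N i) (clamp N j) (clamp N k).

Definition gadd (f g : grid) : grid := fun i j k => f i j k + g i j k.
Definition gsub (f g : grid) : grid := fun i j k => f i j k - g i j k.
Definition gmul (f g : grid) : grid := fun i j k => f i j k * g i j k.

Fixpoint sum1 (n : nat) (f : nat -> R) : R :=
  match n with O => 0 | S m => sum1 m f + f n end.

Definition in_cells (N i j k : nat) : Prop :=
  (1 <= i <= N)%nat /\ (1 <= j <= N)%nat /\ (1 <= k <= N)%nat.

(* Face-centered functions: an x-face function g stores at index (i,j,k)
   its value on the face (i+1/2, j, k), 0 <= i <= N; analogously y, z. *)
Definition Dx N h (f : grid) : grid := fun i j k => (ext N f (S i) j k - ext N f i j k) / h.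
Definition Dy N h (f : grid) : grid := fun i j k => (ext N f i (S j) k - ext N f i j k) / h.
Definition Dz N h (f : grid) : grid := fun i j k => (ext N f i j (S k) - ext N f i j k) / h.
Definition Ax N (f : grid) : grid := fun i j k => (ext N f (S i) j k + ext N f i j k) / 2.
Definition Ay N (f : grid) : grid := fun i j k => (ext N f i (S j) k + ext N f i j k) / 2.
Definition Az N (f : grid) : grid := fun i j k => (ext N f i j (S k) + ext N f i j k) / 2.
(* face -> cell averages, for cells 1 <= i <= N: faces i-1/2 (index i-1) and i+1/2 (index i) *)
Definition ax (g : grid) : grid := fun i j k => (g i j k + g (pred i) j k) / 2.
Definition ay (g : grid) : grid := fun i j k => (g i j k + g i (pred j) k) / 2.
Definition az (g : grid) : grid := fun i j k => (g i j k + g i j (pred k)) / 2.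

Definition inner N h (f g : grid) : R :=
  h ^ 3 * sum1 N (fun i => sum1 N (fun j => sum1 N (fun k => f i j k * g i j k))).
Definition norm2sq N h (f : grid) : R := inner N h f f.

Definition bracket N h (fx fy fz gx gy gz : grid) : R :=
  inner N h (fun i j k => ax (gmul fx gx) i j k + ay (gmul fy gy) i j k + az (gmul fz gz) i j k)
            (fun _ _ _ => 1).
Definition gradnorm2sq N h (f : grid) : R :=
  bracket N h (Dx N h f) (Dy N h f) (Dz N h f) (Dx N h f) (Dy N h f) (Dz N h f).
Definition bracketD N h (Dm f g : grid) : R :=
  bracket N h (gmul (Ax N Dm) (Dx N h f)) (gmul (Ay N Dm) (Dy N h f)) (gmul (Az N Dm) (Dz N h f))
              (Dx N h g) (Dy N h g) (Dz N h g).

Definition maxnorm_le N (f : grid) (C : R) : Prop :=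
  forall i j k, in_cells N i j k -> Rabs (f i j k) <= C.
(* ||grad_h f||_oo <= C : over all x-, y-, z-faces (including boundary faces) *)
Definition gradinf_le N h (f : grid) (C : R) : Prop :=
  (forall i j k, (i <= N)%nat -> (1 <= j <= N)%nat -> (1 <= k <= N)%nat ->
      Rabs (Dx N h f i j k) <= C) /\
  (forall i j k, (1 <= i <= N)%nat -> (j <= N)%nat -> (1 <= k <= N)%nat ->
      Rabs (Dy N h f i j k) <= C) /\
  (forall i j k, (1 <= i <= N)%nat -> (1 <= j <= N)%nat -> (k <= N)%nat ->
      Rabs (Dz N h f i j k) <= C).

Definition Sfun (r1 r0 : grid) : grid := fun i j k =>
  ln (r1 i j k) - (r1 i j k - r0 i j k) / (2 * r1 i j k)
  - (r1 i j k - r0 i j k) ^ 2 / (6 * (r1 i j k) ^ 2).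

From Pilot Require Import Defs.
From Stdlib Require Import Reals Lra Lia.
Open Scope R_scope.

(* Write a = rc1 - r1 and b = rc0 - r0.  On a face between cells
   p and q, the jump of S(rc1,rc0) - S(r1,r0) equals (theta / rc1_q) times the
   jump of a + b, plus a remainder bounded by O(h) (|a| + |b|) at p and q;
   here theta = 5/6 - (rc0/rc1 + r0/r1)/6 is within O(h) of 1/2, since every
   time step and every spatial jump is at most L h.  As rhat >= 3/4 r1 and
   r1 = rc1 - a, the coefficient rhat theta / rc1 is at least 3/8 - |a|/m0,
   and because the jump of a + b is itself at most 4 L h, Young's inequality
   absorbs both the |a| part and the remainder into 3/32 of the squared jump.
   Each face thus contributes at least 1/4 of its squared gradient, up to
   C (|a|^2 + |b|^2) at its two cells; summing over faces gives the estimate,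
   in fact without the h^8 term. *)

Lemma Rabs_le_inv x c : Rabs x <= c -> - c <= x <= c.
Proof. unfold Rabs; destruct (Rcase_abs x); lra. Qed.

Lemma Rabs_mult_le x y A B : Rabs x <= A -> Rabs y <= B -> Rabs (x * y) <= A * B.
Proof.
  intros Hx Hy. rewrite Rabs_mult.
  apply Rmult_le_compat; auto using Rabs_pos.
Qed.

Lemma Rabs_inv_le z m : 0 < m -> m <= z -> Rabs (/ z) <= / m.
Proof.
  intros Hm Hz. rewrite Rabs_pos_eq.
  - apply Rinv_le_contravar; lra.
  - left; apply Rinv_0_lt_compat; lra.
Qed.

Lemma Rabs_div_sub_1_le p q m c :
  0 < m -> m <= q -> Rabs (p - q) <= c -> Rabs (p / q - 1) <= c * / m.
Proof.
  intros Hm Hq Hpq. replace (p / q - 1) with ((p - q) * / q) by (field; lra).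
  apply Rabs_mult_le; auto using Rabs_inv_le.
Qed.

Lemma young_32 x y : x * y <= y ^ 2 / 32 + 8 * x ^ 2.
Proof. pose proof (pow2_ge_0 (y / 4 - 4 * x)). nra. Qed.

Lemma young_absorb c t s : 0 <= c -> Rabs t <= s -> c * t ^ 2 <= t ^ 2 / 32 + 8 * (c * s) ^ 2.
Proof.
  intros Hc Ht. rewrite <- (pow2_abs t).
  pose proof (young_32 (c * s) (Rabs t)).
  assert (c * Rabs t * Rabs t <= c * s * Rabs t).
  { apply Rmult_le_compat_r; [apply Rabs_pos | apply Rmult_le_compat_l; lra]. }
  lra.
Qed.

Lemma young_cross x t B : Rabs x <= B * Rabs t -> - (t ^ 2 / 32 + 8 * B ^ 2) <= x.
Proof.
  intros Hx. rewrite <- (pow2_abs t).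
  pose proof (young_32 B (Rabs t)). apply Rabs_le_inv in Hx. lra.
Qed.

Lemma ln_div x y : 0 < x -> 0 < y -> ln (x / y) = ln x - ln y.
Proof.
  intros Hx Hy. unfold Rdiv.
  rewrite ln_mult, ln_Rinv; auto using Rinv_0_lt_compat; lra.
Qed.

Lemma ln_sub_mean_value u v e : 0 < u -> 0 < v ->
  Rabs (/ u - 1) <= e -> Rabs (/ v - 1) <= e ->
  exists m, Rabs (m - 1) <= e /\ ln u - ln v = m * (u - v).
Proof.
  intros Hu Hv Heu Hev.
  apply Rabs_le_inv in Heu; apply Rabs_le_inv in Hev.
  assert (ln_deriv : forall c, 0 < c -> derivable_pt_lim ln c (/ c))
    by exact derivable_pt_lim_ln.
  destruct (Rtotal_order u v) as [Huv | [<- | Hvu]].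
  - destruct (MVT_cor2 ln Rinv u v Huv) as [c [Hc [Huc Hcv]]].
    { intros c Hc; apply ln_deriv; lra. }
    assert (/ v <= / c) by (apply Rinv_le_contravar; lra).
    assert (/ c <= / u) by (apply Rinv_le_contravar; lra).
    exists (/ c); split; [apply Rabs_le | ]; lra.
  - exists 1; split; [rewrite Rminus_diag, Rabs_R0 |]; lra.
  - destruct (MVT_cor2 ln Rinv v u Hvu) as [c [Hc [Hvc Hcu]]].
    { intros c Hc; apply ln_deriv; lra. }
    assert (/ u <= / c) by (apply Rinv_le_contravar; lra).
    assert (/ c <= / v) by (apply Rinv_le_contravar; lra).
    exists (/ c); split; [apply Rabs_le | ]; lra.
Qed.

Lemma Rabs_sub_le a b : Rabs (a - b) <= Rabs a + Rabs b.
Proof. unfold Rminus. rewrite <- (Rabs_Ropp b). apply Rabs_triang. Qed.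

Lemma sqr_sum4_le a b c e : (a + b + c + e) ^ 2 <= 4 * (a ^ 2 + b ^ 2 + c ^ 2 + e ^ 2).
Proof.
  pose proof (pow2_ge_0 (a - b)); pose proof (pow2_ge_0 (a - c));
  pose proof (pow2_ge_0 (a - e)); pose proof (pow2_ge_0 (b - c));
  pose proof (pow2_ge_0 (b - e)); pose proof (pow2_ge_0 (c - e)).
  lra.
Qed.

Definition Sval (x y : R) : R :=
  ln x - (x - y) / (2 * x) - (x - y) ^ 2 / (6 * x ^ 2).

Lemma Sval_log_form x y : 0 < x ->
  Sval x y = ln x + (- 2/3 + 5/6 * (y / x) - 1/6 * (y / x) ^ 2).
Proof. intros Hx. unfold Sval. field. lra. Qed.

Definition face_const (m0 U : R) : R :=
  128 * (/ m0) ^ 2 + 50 * U ^ 2 * (9 * (/ m0) ^ 2 + U * (/ m0) ^ 3) ^ 2.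

Lemma face_const_pos m0 U : 0 < m0 -> 0 < face_const m0 U.
Proof.
  intros Hm0. unfold face_const.
  pose proof (pow_lt _ 2 (Rinv_0_lt_compat _ Hm0)).
  pose proof (pow2_ge_0 U); pose proof (pow2_ge_0 (9 * (/ m0) ^ 2 + U * (/ m0) ^ 3)).
  assert (0 <= U ^ 2 * (9 * (/ m0) ^ 2 + U * (/ m0) ^ 3) ^ 2) by (apply Rmult_le_pos; lra).
  lra.
Qed.

(* Values at two adjacent cells p and q: X, Y, x, y, z stand for rc1, rc0, r1,
   r0, rhat; d bounds every spatial and temporal jump. *)
Section FaceEstimate.

Variables (m0 U d : R) (Xp Xq Yp Yq xp xq yp yq zp zq : R).

Hypothesis m0_gt0 : 0 < m0.
Hypothesis d_small : 32 * d * (m0 + U) <= m0 ^ 2.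
Hypotheses (Xp_box : m0 <= Xp <= U) (Xq_box : m0 <= Xq <= U)
  (xp_box : m0 <= xp <= U) (xq_box : m0 <= xq <= U) (yp_box : m0 <= yp <= U).
Hypotheses (X_jump : Rabs (Xq - Xp) <= d) (Y_jump : Rabs (Yq - Yp) <= d)
  (x_jump : Rabs (xq - xp) <= d) (y_jump : Rabs (yq - yp) <= d).
Hypotheses (XYp : Rabs (Xp - Yp) <= d) (XYq : Rabs (Xq - Yq) <= d)
  (xyp : Rabs (xp - yp) <= d) (xyq : Rabs (xq - yq) <= d).
Hypotheses (zp_ratio : 3/4 * xp <= zp <= 5/4 * xp)
  (zq_ratio : 3/4 * xq <= zq <= 5/4 * xq).

Local Notation i0 := (/ m0).
Local Notation ap := (Xp - xp).
Local Notation aq := (Xq - xq).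
Local Notation bp := (Yp - yp).
Local Notation bq := (Yq - yq).
Local Notation Delta := ((aq + bq) - (ap + bp)).
Local Notation theta := (5/6 - (Yq / Xq + yq / xq) / 6).
Local Notation gp := ((xp - yp) / (Xp * xp)).
Local Notation gq := ((xq - yq) / (Xq * xq)).
Local Notation sigma := (Yp / Xp - yp / xp).
Local Notation ratio_jumps := (Yq / Xq - Yp / Xp + yq / xq - yp / xp).
Local Notation remainder m :=
  ((m / Xp - 2 * theta / Xq) * (aq - ap) - m * ap * (xq - xp) * / Xp * / xp
   + theta * (bp - ap) * (/ Xq - / Xp) + theta * (aq - ap) * gq
   + theta * ap * (gq - gp) - 1/6 * sigma * ratio_jumps).

Lemma inv_m0_gt0 : 0 < i0.
Proof. exact (Rinv_0_lt_compat _ m0_gt0). Qed.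

Lemma d_ge0 : 0 <= d.
Proof. pose proof (Rabs_pos (Xq - Xp)); lra. Qed.

Lemma d_scale_small : i0 * (d + U * d * i0) <= 1/32.
Proof.
  pose proof inv_m0_gt0. apply (Rmult_le_reg_r (32 * m0 ^ 2)); [nra |].
  replace (i0 * (d + U * d * i0) * (32 * m0 ^ 2)) with (32 * d * (m0 + U))
    by (field; lra).
  lra.
Qed.

Lemma d_i0_le : d * i0 <= 1/32.
Proof.
  pose proof d_scale_small; pose proof inv_m0_gt0; pose proof d_ge0.
  assert (0 <= U * d * i0 * i0) by (repeat apply Rmult_le_pos; lra). nra.
Qed.

Lemma ratio_near_1 p q : m0 <= q -> Rabs (p - q) <= d -> Rabs (p / q - 1) <= d * i0.
Proof. intros; apply Rabs_div_sub_1_le; auto. Qed.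

Lemma log_jump : exists m, Rabs (m - 1) <= d * i0 /\
  ln Xq - ln Xp - (ln xq - ln xp) = m * (Xq / Xp - xq / xp).
Proof.
  destruct (ln_sub_mean_value (Xq / Xp) (xq / xp) (d * i0)) as [m [Hm Hln]].
  - apply Rdiv_lt_0_compat; lra.
  - apply Rdiv_lt_0_compat; lra.
  - replace (/ (Xq / Xp)) with (Xp / Xq) by (field; lra).
    apply ratio_near_1; [lra |]. rewrite Rabs_minus_sym; auto.
  - replace (/ (xq / xp)) with (xp / xq) by (field; lra).
    apply ratio_near_1; [lra |]. rewrite Rabs_minus_sym; auto.
  - exists m; split; auto. rewrite <- !ln_div by lra. exact Hln.
Qed.

(* The slope [m] of [ln] between the two cell ratios isolates [theta / Xq] as
   the coefficient of the jump of [a + b]; everything else is of size [d]. *)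
Lemma Sval_jump_decomp m :
  ln Xq - ln Xp - (ln xq - ln xp) = m * (Xq / Xp - xq / xp) ->
  (Sval Xq Yq - Sval xq yq) - (Sval Xp Yp - Sval xp yp)
  = theta / Xq * Delta + remainder m.
Proof.
  intros Hlog. rewrite !Sval_log_form by lra.
  replace (ln Xq) with (ln Xp + ln xq - ln xp + m * (Xq / Xp - xq / xp)) by lra.
  field; lra.
Qed.

Lemma theta_near_half : Rabs (theta - 1/2) <= d * i0 / 3.
Proof.
  assert (H1 := ratio_near_1 Yq Xq ltac:(lra) ltac:(rewrite Rabs_minus_sym; auto)).
  assert (H2 := ratio_near_1 yq xq ltac:(lra) ltac:(rewrite Rabs_minus_sym; auto)).
  apply Rabs_le_inv in H1; apply Rabs_le_inv in H2. apply Rabs_le; lra.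
Qed.

Lemma inv_jump_le : Rabs (/ Xq - / Xp) <= d * i0 ^ 2.
Proof.
  replace (/ Xq - / Xp) with ((Xp - Xq) * / Xp * / Xq) by (field; lra).
  replace (d * i0 ^ 2) with (d * i0 * i0) by ring.
  apply Rabs_mult_le; [apply Rabs_mult_le |]; try apply Rabs_inv_le; try lra.
  rewrite Rabs_minus_sym; auto.
Qed.

Lemma gap_div_prod_le X x y : m0 <= X -> m0 <= x -> Rabs (x - y) <= d ->
  Rabs ((x - y) / (X * x)) <= d * i0 ^ 2.
Proof.
  intros HX Hx Hxy.
  replace ((x - y) / (X * x)) with ((x - y) * / X * / x) by (field; lra).
  replace (d * i0 ^ 2) with (d * i0 * i0) by ring.
  apply Rabs_mult_le; [apply Rabs_mult_le |]; auto using Rabs_inv_le.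
Qed.

Lemma sigma_le : Rabs sigma <= U * (Rabs ap + Rabs bp) * i0 ^ 2.
Proof.
  replace sigma with ((bp * xp - ap * yp) * / Xp * / xp) by (field; lra).
  replace (U * (Rabs ap + Rabs bp) * i0 ^ 2) with (U * (Rabs ap + Rabs bp) * i0 * i0)
    by ring.
  apply Rabs_mult_le; [apply Rabs_mult_le |]; try apply Rabs_inv_le; try lra.
  eapply Rle_trans; [apply Rabs_sub_le |].
  rewrite !Rabs_mult, (Rabs_pos_eq xp), (Rabs_pos_eq yp) by lra.
  assert (Rabs bp * xp <= Rabs bp * U) by (apply Rmult_le_compat_l; [apply Rabs_pos | lra]).
  assert (Rabs ap * yp <= Rabs ap * U) by (apply Rmult_le_compat_l; [apply Rabs_pos | lra]).
  lra.
Qed.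

Lemma ratio_jumps_le : Rabs ratio_jumps <= 4 * (d * i0).
Proof.
  assert (H1 := ratio_near_1 Yq Xq ltac:(lra) ltac:(rewrite Rabs_minus_sym; auto)).
  assert (H2 := ratio_near_1 Yp Xp ltac:(lra) ltac:(rewrite Rabs_minus_sym; auto)).
  assert (H3 := ratio_near_1 yq xq ltac:(lra) ltac:(rewrite Rabs_minus_sym; auto)).
  assert (H4 := ratio_near_1 yp xp ltac:(lra) ltac:(rewrite Rabs_minus_sym; auto)).
  apply Rabs_le_inv in H1; apply Rabs_le_inv in H2.
  apply Rabs_le_inv in H3; apply Rabs_le_inv in H4. apply Rabs_le; lra.
Qed.

Lemma slope_coefficient_le m : Rabs (m - 1) <= d * i0 ->
  Rabs (m / Xp - 2 * theta / Xq) <= 3 * (d * i0 ^ 2).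
Proof.
  intros Hm. pose proof inv_m0_gt0.
  assert (Hth := theta_near_half). apply Rabs_le_inv in Hth.
  assert (Ip := Rabs_inv_le Xp m0 m0_gt0 ltac:(lra)).
  assert (Iq := Rabs_inv_le Xq m0 m0_gt0 ltac:(lra)).
  replace (m / Xp - 2 * theta / Xq)
    with ((m - 1) * / Xp + (/ Xp - / Xq) + (1 - 2 * theta) * / Xq) by (field; lra).
  assert (H1 : Rabs ((m - 1) * / Xp) <= d * i0 * i0) by (apply Rabs_mult_le; auto).
  assert (H2 : Rabs ((1 - 2 * theta) * / Xq) <= 2 * (d * i0 / 3) * i0)
    by (apply Rabs_mult_le; auto; apply Rabs_le; lra).
  assert (H3 := inv_jump_le). rewrite Rabs_minus_sym in H3.
  apply Rabs_le_inv in H1; apply Rabs_le_inv in H2; apply Rabs_le_inv in H3.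
  apply Rabs_le; nra.
Qed.

Lemma remainder_le m : Rabs (m - 1) <= d * i0 ->
  Rabs (remainder m)
  <= (9 * i0 ^ 2 + U * i0 ^ 3) * d * (Rabs ap + Rabs aq + Rabs bp + Rabs bq).
Proof.
  intros Hm.
  pose proof inv_m0_gt0; pose proof d_ge0; pose proof d_i0_le.
  assert (Hth := theta_near_half). apply Rabs_le_inv in Hth.
  assert (theta_le : Rabs theta <= 1) by (apply Rabs_le; lra).
  assert (m_le : Rabs m <= 2) by (apply Rabs_le_inv in Hm; apply Rabs_le; lra).
  assert (Hinv := inv_jump_le).
  assert (Hgq := gap_div_prod_le Xq xq yq ltac:(lra) ltac:(lra) xyq).
  assert (Hgp := gap_div_prod_le Xp xp yp ltac:(lra) ltac:(lra) xyp).
  assert (Ip := Rabs_inv_le Xp m0 m0_gt0 ltac:(lra)).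
  assert (Ixp := Rabs_inv_le xp m0 m0_gt0 ltac:(lra)).
  assert (coef_le := slope_coefficient_le m Hm).
  assert (T1 : Rabs ((m / Xp - 2 * theta / Xq) * (aq - ap))
               <= 3 * (d * i0 ^ 2) * (Rabs aq + Rabs ap))
    by (apply Rabs_mult_le; auto using Rabs_sub_le).
  assert (T2 : Rabs (m * ap * (xq - xp) * / Xp * / xp) <= 2 * Rabs ap * d * i0 * i0)
    by (repeat apply Rabs_mult_le; auto; lra).
  assert (T3 : Rabs (theta * (bp - ap) * (/ Xq - / Xp))
               <= 1 * (Rabs bp + Rabs ap) * (d * i0 ^ 2))
    by (repeat apply Rabs_mult_le; auto using Rabs_sub_le).
  assert (T4 : Rabs (theta * (aq - ap) * gq) <= 1 * (Rabs aq + Rabs ap) * (d * i0 ^ 2))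
    by (apply Rabs_mult_le; [apply Rabs_mult_le |]; auto using Rabs_sub_le).
  assert (T5 : Rabs (theta * ap * (gq - gp)) <= 1 * Rabs ap * (2 * (d * i0 ^ 2))).
  { apply Rabs_mult_le; [apply Rabs_mult_le |]; auto; try lra.
    eapply Rle_trans; [apply Rabs_sub_le | lra]. }
  assert (T6 : Rabs (1/6 * sigma * ratio_jumps)
               <= 1/6 * (U * (Rabs ap + Rabs bp) * i0 ^ 2) * (4 * (d * i0))).
  { apply Rabs_mult_le; [apply Rabs_mult_le |]; auto using sigma_le, ratio_jumps_le.
    rewrite Rabs_pos_eq; lra. }
  apply Rabs_le_inv in T1; apply Rabs_le_inv in T2; apply Rabs_le_inv in T3.
  apply Rabs_le_inv in T4; apply Rabs_le_inv in T5; apply Rabs_le_inv in T6.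
  assert (w2 : 0 <= d * i0 ^ 2) by (apply Rmult_le_pos; [lra | apply pow_le; lra]).
  assert (w3 : 0 <= U * d * i0 ^ 3) by (repeat apply Rmult_le_pos; try apply pow_le; lra).
  pose proof (Rmult_le_pos _ _ w2 (Rabs_pos aq)); pose proof (Rmult_le_pos _ _ w2 (Rabs_pos bp)).
  pose proof (Rmult_le_pos _ _ w2 (Rabs_pos bq)); pose proof (Rmult_le_pos _ _ w3 (Rabs_pos ap)).
  pose proof (Rmult_le_pos _ _ w3 (Rabs_pos aq)); pose proof (Rmult_le_pos _ _ w3 (Rabs_pos bp)).
  pose proof (Rmult_le_pos _ _ w3 (Rabs_pos bq)).
  apply Rabs_le; lra.
Qed.

Lemma Delta_le : Rabs Delta <= 4 * d.
Proof.
  apply Rabs_le_inv in X_jump; apply Rabs_le_inv in Y_jump.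
  apply Rabs_le_inv in x_jump; apply Rabs_le_inv in y_jump. apply Rabs_le; lra.
Qed.

Lemma coefficient_ge : (zq + zp) / 2 * theta / Xq >= 3/8 - i0 * Rabs aq - 1/32.
Proof.
  pose proof inv_m0_gt0; pose proof d_ge0; pose proof d_scale_small.
  set (A := (zq + zp) / 2).
  assert (Hth := theta_near_half). apply Rabs_le_inv in Hth.
  assert (Hx := x_jump). apply Rabs_le_inv in Hx.
  assert (Haq := Rabs_le_inv aq _ (Rle_refl _)).
  assert (A_box : 3/8 * (xp + xq) <= A <= 5/4 * U) by (unfold A; lra).
  assert (A * (theta - 1/2) >= - (A * (d * i0 / 3))).
  { assert (A * - (d * i0 / 3) <= A * (theta - 1/2)) by (apply Rmult_le_compat_l; lra).
    lra. }
  assert (A * (d * i0 / 3) <= 5/4 * U * (d * i0 / 3))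
    by (apply Rmult_le_compat_r; [apply Rmult_le_pos; [apply Rmult_le_pos |] |]; lra).
  pose proof (Rabs_pos aq).
  assert (0 <= U * d * i0) by (repeat apply Rmult_le_pos; lra).
  set (W := Rabs aq + d + U * d * i0).
  assert (W_ge0 : 0 <= W) by (unfold W; lra).
  assert (HAth : A * theta - 3/8 * Xq >= - W) by (unfold W; lra).
  assert (Iq : 0 < / Xq <= i0)
    by (split; [apply Rinv_0_lt_compat | apply Rinv_le_contravar]; lra).
  replace (A * theta / Xq) with (3/8 + (A * theta - 3/8 * Xq) * / Xq) by (field; lra).
  assert (- W * / Xq <= (A * theta - 3/8 * Xq) * / Xq)
    by (apply Rmult_le_compat_r; lra).
  assert (W * / Xq <= W * i0) by (apply Rmult_le_compat_l; lra).
  unfold W in *. lra.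
Qed.

Lemma face_estimate :
  (zq + zp) / 2 * ((Sval Xq Yq - Sval xq yq) - (Sval Xp Yp - Sval xp yp)) * Delta
  >= 1/4 * Delta ^ 2
     - face_const m0 U * d ^ 2 * ((ap ^ 2 + bp ^ 2) + (aq ^ 2 + bq ^ 2)).
Proof.
  pose proof inv_m0_gt0; pose proof d_ge0.
  destruct log_jump as [m [Hm Hlog]]. rewrite (Sval_jump_decomp m Hlog).
  assert (Hrem := remainder_le m Hm).
  set (A := (zq + zp) / 2). set (KE := 9 * i0 ^ 2 + U * i0 ^ 3) in Hrem.
  set (Sg := Rabs ap + Rabs aq + Rabs bp + Rabs bq) in Hrem.
  set (Q := (ap ^ 2 + bp ^ 2) + (aq ^ 2 + bq ^ 2)).
  assert (Hcoef := coefficient_ge). fold A in Hcoef.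
  pose proof Delta_le as HDelta.
  replace (A * (theta / Xq * Delta + remainder m) * Delta)
    with (A * theta / Xq * Delta ^ 2 + A * remainder m * Delta) by (field; lra).
  assert (main : A * theta / Xq * Delta ^ 2 >= (3/8 - i0 * Rabs aq - 1/32) * Delta ^ 2)
    by (apply Rle_ge, Rmult_le_compat_r; [apply pow2_ge_0 | lra]).
  (* [|Delta| <= 4 d] turns the cubic term [|aq| Delta^2] into a quadratic one. *)
  assert (cubic := young_absorb (i0 * Rabs aq) Delta (4 * d)
                     ltac:(apply Rmult_le_pos; [lra | apply Rabs_pos]) HDelta).
  assert (cross : - (Delta ^ 2 / 32 + 8 * (5/4 * U * (KE * d * Sg)) ^ 2)
                  <= A * remainder m * Delta).
  { apply young_cross.
    apply Rabs_mult_le; [apply Rabs_mult_le |]; auto; try lra.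
    rewrite Rabs_pos_eq; unfold A; lra. }
  assert (Sg_sq : Sg ^ 2 <= 4 * Q).
  { unfold Sg, Q. rewrite <- (pow2_abs ap), <- (pow2_abs aq), <- (pow2_abs bp),
      <- (pow2_abs bq).
    pose proof (sqr_sum4_le (Rabs ap) (Rabs aq) (Rabs bp) (Rabs bq)). lra. }
  assert (aq_sq : (d * i0) ^ 2 * Rabs aq ^ 2 <= (d * i0) ^ 2 * Q).
  { apply Rmult_le_compat_l; [apply pow2_ge_0 |]. rewrite pow2_abs.
    unfold Q; pose proof (pow2_ge_0 ap); pose proof (pow2_ge_0 bp);
    pose proof (pow2_ge_0 bq); lra. }
  assert ((U * KE * d) ^ 2 * Sg ^ 2 <= (U * KE * d) ^ 2 * (4 * Q))
    by (apply Rmult_le_compat_l; [apply pow2_ge_0 | lra]).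
  pose proof (pow2_ge_0 Delta).
  unfold face_const. fold KE. lra.
Qed.

End FaceEstimate.

Lemma sum1_le n f g : (forall i, (1 <= i <= n)%nat -> f i <= g i) -> sum1 n f <= sum1 n g.
Proof.
  induction n as [| n IH]; intros H; simpl; [lra |].
  apply Rplus_le_compat; [apply IH; intros |]; apply H; lia.
Qed.

Lemma sum1_ext n f g : (forall i, (1 <= i <= n)%nat -> f i = g i) -> sum1 n f = sum1 n g.
Proof.
  intros H. apply Rle_antisym; apply sum1_le; intros i Hi; rewrite H; auto; lra.
Qed.

Lemma sum1_plus n f g : sum1 n (fun i => f i + g i) = sum1 n f + sum1 n g.
Proof. induction n as [| n IH]; simpl; [ring | rewrite IH; ring]. Qed.

Lemma sum1_scal n c f : sum1 n (fun i => c * f i) = c * sum1 n f.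
Proof. induction n as [| n IH]; simpl; [ring | rewrite IH; ring]. Qed.

Lemma sum1_nonneg n f : (forall i, 0 <= f i) -> 0 <= sum1 n f.
Proof. intros H. induction n as [| n IH]; simpl; [lra | specialize (H (S n)); lra]. Qed.

Lemma sum1_first n f : sum1 (S n) f = f 1%nat + sum1 n (fun i => f (S i)).
Proof.
  induction n as [| n IH]; [simpl; ring |].
  change (sum1 (S (S n)) f) with (sum1 (S n) f + f (S (S n))).
  rewrite IH. simpl. ring.
Qed.

Lemma sum1_term_le n f i : (forall i, 0 <= f i) -> (1 <= i <= n)%nat -> f i <= sum1 n f.
Proof.
  intros Hf. induction n as [| n IH]; intros Hi; [lia |]. simpl.
  destruct (Nat.eq_dec i (S n)) as [-> | Hne].
  - pose proof (sum1_nonneg n f Hf). lra.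
  - pose proof (IH ltac:(lia)). pose proof (Hf (S n)). lra.
Qed.

Definition sum3 (N : nat) (f : grid) : R :=
  sum1 N (fun i => sum1 N (fun j => sum1 N (fun k => f i j k))).

Lemma sum3_le N f g : (forall i j k, in_cells N i j k -> f i j k <= g i j k) ->
  sum3 N f <= sum3 N g.
Proof.
  intros H. unfold sum3.
  apply sum1_le; intros; apply sum1_le; intros; apply sum1_le; intros.
  apply H; repeat split; lia.
Qed.

Lemma sum3_ext N f g : (forall i j k, f i j k = g i j k) -> sum3 N f = sum3 N g.
Proof.
  intros H. unfold sum3.
  apply sum1_ext; intros; apply sum1_ext; intros; apply sum1_ext; auto.
Qed.

Lemma sum3_plus N f g : sum3 N (fun i j k => f i j k + g i j k) = sum3 N f + sum3 N g.
Proof.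
  unfold sum3. rewrite <- sum1_plus. apply sum1_ext; intros.
  rewrite <- sum1_plus. apply sum1_ext; intros. apply sum1_plus.
Qed.

Lemma sum3_scal N c f : sum3 N (fun i j k => c * f i j k) = c * sum3 N f.
Proof.
  unfold sum3. rewrite <- sum1_scal. apply sum1_ext; intros.
  rewrite <- sum1_scal. apply sum1_ext; intros. apply sum1_scal.
Qed.

Lemma clamp_id N i : (1 <= i <= N)%nat -> clamp N i = i.
Proof. unfold clamp; lia. Qed.

Lemma clamp_in_range N i : (1 <= N)%nat -> (1 <= clamp N i <= N)%nat.
Proof. unfold clamp; lia. Qed.

Definition shift_bounded (phi : nat -> nat) : Prop :=
  forall N (G : nat -> R), (1 <= N)%nat -> (forall i, 0 <= G i) ->
  sum1 N (fun i => G (clamp N (phi i))) <= 2 * sum1 N G.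

Lemma shift_bounded_of_fixed phi :
  (forall N i, (1 <= i <= N)%nat -> clamp N (phi i) = i) -> shift_bounded phi.
Proof.
  intros Hphi N G HN HG. rewrite (sum1_ext N _ G) by (intros; rewrite Hphi; auto).
  pose proof (sum1_nonneg N G HG). lra.
Qed.

Lemma shift_bounded_id : shift_bounded (fun i => i).
Proof. apply shift_bounded_of_fixed, clamp_id. Qed.

Lemma shift_bounded_succ_pred : shift_bounded (fun i => S (pred i)).
Proof.
  apply shift_bounded_of_fixed. intros.
  rewrite Nat.succ_pred_pos by lia. apply clamp_id; auto.
Qed.

Lemma shift_bounded_succ : shift_bounded S.
Proof.
  intros [| n] G HN HG; [lia |]. simpl.
  rewrite (sum1_ext n _ (fun i => G (S i))) by (intros; rewrite clamp_id; auto; lia).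
  replace (clamp (S n) (S (S n))) with (S n) by (unfold clamp; lia).
  pose proof (sum1_first n G) as Hfirst. simpl in Hfirst.
  pose proof (HG 1%nat). pose proof (HG (S n)). pose proof (sum1_nonneg n G HG).
  lra.
Qed.

Lemma shift_bounded_pred : shift_bounded pred.
Proof.
  intros [| n] G HN HG; [lia |].
  rewrite sum1_first. simpl pred.
  rewrite (sum1_ext n _ G) by (intros; rewrite clamp_id; auto; lia).
  replace (clamp (S n) 0) with 1%nat by (unfold clamp; lia).
  simpl. pose proof (HG 1%nat). pose proof (HG (S n)).
  destruct n as [| n]; [simpl; lra |].
  pose proof (sum1_term_le (S n) G 1 HG ltac:(lia)). lra.
Qed.

Lemma sum3_shift_le N (V : grid) p1 p2 p3 : (1 <= N)%nat ->
  shift_bounded p1 -> shift_bounded p2 -> shift_bounded p3 ->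
  (forall i j k, 0 <= V i j k) ->
  sum3 N (fun i j k => ext N V (p1 i) (p2 j) (p3 k)) <= 8 * sum3 N V.
Proof.
  intros HN H1 H2 H3 HV. unfold sum3, ext.
  eapply Rle_trans.
  { apply sum1_le; intros i _; apply sum1_le; intros j _.
    apply (H3 N (fun k => V (clamp N (p1 i)) (clamp N (p2 j)) k)); auto. }
  rewrite (sum1_ext N _ (fun i => 2 * sum1 N (fun j => sum1 N
             (fun k => V (clamp N (p1 i)) (clamp N (p2 j)) k)))) by (intros; apply sum1_scal).
  rewrite sum1_scal.
  eapply Rle_trans.
  { apply Rmult_le_compat_l; [lra |]. apply sum1_le; intros i _.
    apply (H2 N (fun j => sum1 N (fun k => V (clamp N (p1 i)) j k))); auto.
    intros; apply sum1_nonneg; auto. }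
  rewrite sum1_scal.
  assert (sum1 N (fun i => sum1 N (fun j => sum1 N (fun k => V (clamp N (p1 i)) j k)))
          <= 2 * sum1 N (fun i => sum1 N (fun j => sum1 N (fun k => V i j k)))).
  { apply (H1 N (fun i => sum1 N (fun j => sum1 N (fun k => V i j k)))); auto.
    intros; apply sum1_nonneg; intros; apply sum1_nonneg; auto. }
  lra.
Qed.

Lemma quotient_scaling A s t K L h Q : 0 < h ->
  A * s * t >= 1/4 * t ^ 2 - K * (L * h) ^ 2 * Q ->
  A * (s / h) * (t / h) >= 1/4 * (t / h) ^ 2 - K * L ^ 2 * Q.
Proof.
  intros Hh H.
  assert (Hh2 : 0 < / h ^ 2) by (apply Rinv_0_lt_compat, pow_lt; lra).
  apply Rle_ge. apply Rge_le in H.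
  apply (Rmult_le_compat_r (/ h ^ 2)) in H; [| lra].
  replace (A * (s / h) * (t / h)) with (A * s * t * / h ^ 2) by (field; lra).
  replace (1/4 * (t / h) ^ 2 - K * L ^ 2 * Q)
    with ((1/4 * t ^ 2 - K * (L * h) ^ 2 * Q) * / h ^ 2) by (field; lra).
  exact H.
Qed.

Lemma jump_le_of_quotient p q h c d : 0 < h -> c * h <= d ->
  Rabs ((q - p) / h) <= c -> Rabs (q - p) <= d.
Proof.
  intros Hh Hcd H.
  replace (q - p) with ((q - p) / h * h) by (field; lra).
  rewrite Rabs_mult, (Rabs_pos_eq h) by lra.
  apply Rmult_le_compat_r with (r := h) in H; lra.
Qed.

Definition err_sq (rc1 r1 rc0 r0 : grid) : grid := fun i j k =>
  (rc1 i j k - r1 i j k) ^ 2 + (rc0 i j k - r0 i j k) ^ 2.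

(* [Defs.Dx], since [Reals] exports another [Dx]. *)
Definition flux_density N h (Dm f g : grid) : grid := fun i j k =>
  ax (gmul (gmul (Ax N Dm) (Defs.Dx N h f)) (Defs.Dx N h g)) i j k
  + ay (gmul (gmul (Ay N Dm) (Dy N h f)) (Dy N h g)) i j k
  + az (gmul (gmul (Az N Dm) (Dz N h f)) (Dz N h g)) i j k.

Definition grad_density N h (f : grid) : grid := fun i j k =>
  ax (gmul (Defs.Dx N h f) (Defs.Dx N h f)) i j k + ay (gmul (Dy N h f) (Dy N h f)) i j k
  + az (gmul (Dz N h f) (Dz N h f)) i j k.

(* The cells touched by the six faces of cell [(i,j,k)]; [S (pred i)] is [i]
   itself, the right neighbour of the face [i - 1/2]. *)
Definition neighbour_sum N (V : grid) : grid := fun i j k =>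
  ext N V i j k + ext N V (S i) j k + ext N V (pred i) j k + ext N V (S (pred i)) j k
  + ext N V i j k + ext N V i (S j) k + ext N V i (pred j) k + ext N V i (S (pred j)) k
  + ext N V i j k + ext N V i j (S k) + ext N V i j (pred k) + ext N V i j (S (pred k)).

Lemma sum3_neighbour_sum_le N V : (1 <= N)%nat -> (forall i j k, 0 <= V i j k) ->
  sum3 N (neighbour_sum N V) <= 96 * sum3 N V.
Proof.
  intros HN HV. unfold neighbour_sum. rewrite !sum3_plus.
  pose proof shift_bounded_id as I; pose proof shift_bounded_succ as Sc;
  pose proof shift_bounded_pred as P; pose proof shift_bounded_succ_pred as SP.
  assert (sum3 N (ext N V) <= 8 * sum3 N V) by exact (sum3_shift_le N V _ _ _ HN I I I HV).
  pose proof (sum3_shift_le N V _ _ _ HN Sc I I HV).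
  pose proof (sum3_shift_le N V _ _ _ HN P I I HV).
  pose proof (sum3_shift_le N V _ _ _ HN SP I I HV).
  pose proof (sum3_shift_le N V _ _ _ HN I Sc I HV).
  pose proof (sum3_shift_le N V _ _ _ HN I P I HV).
  pose proof (sum3_shift_le N V _ _ _ HN I SP I HV).
  pose proof (sum3_shift_le N V _ _ _ HN I I Sc HV).
  pose proof (sum3_shift_le N V _ _ _ HN I I P HV).
  pose proof (sum3_shift_le N V _ _ _ HN I I SP HV).
  cbv beta in *. lra.
Qed.

Section GridEstimate.

Variables (N : nat) (h dt eps Cs lam2 : R) (rc0 rc1 r0 r1 rhat : grid).

Local Notation m0 := (eps / 4).
Local Notation U := (Cs + eps).
Local Notation L := ((Cs + 1) * (lam2 + 1)).
Local Notation St := (gsub (Sfun rc1 rc0) (Sfun r1 r0)).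
Local Notation W := (gadd (gsub rc1 r1) (gsub rc0 r0)).
Local Notation V := (err_sq rc1 r1 rc0 r0).

Hypotheses (N_ge1 : (1 <= N)%nat) (eps_gt0 : 0 < eps) (Cs_gt0 : 0 < Cs)
  (lam2_gt0 : 0 < lam2) (h_gt0 : 0 < h) (dt_range : 0 <= dt <= lam2 * h).
Hypothesis h_small : 32 * (L * h) * (m0 + U) <= m0 ^ 2.
Hypothesis rc_box : forall i j k, in_cells N i j k ->
  eps <= rc0 i j k <= Cs /\ eps <= rc1 i j k <= Cs.
Hypotheses (rc0_grad : gradinf_le N h rc0 Cs) (rc1_grad : gradinf_le N h rc1 Cs).
Hypothesis rc_step : maxnorm_le N (gsub rc1 rc0) (Cs * dt).
Hypothesis r1_box : forall i j k, in_cells N i j k -> eps / 2 <= r1 i j k <= Cs + eps / 2.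
Hypotheses (r0_grad : gradinf_le N h r0 (Cs + 1)) (r1_grad : gradinf_le N h r1 (Cs + 1)).
Hypothesis r_step : maxnorm_le N (gsub r1 r0) ((Cs + 1) * dt).
Hypothesis rhat_ratio : forall i j k, in_cells N i j k ->
  3/4 <= rhat i j k / r1 i j k <= 5/4.

Lemma mesh_step_le c : 0 <= c <= Cs + 1 -> c * h <= L * h /\ c * dt <= L * h.
Proof. intros Hc. split; nra. Qed.

Lemma Lh_le_m0 : L * h <= m0 / 32.
Proof.
  assert (0 <= L * h) by (apply Rmult_le_pos; nra).
  assert (32 * (L * h) * m0 <= 32 * (L * h) * (m0 + U)) by nra.
  nra.
Qed.

Lemma cell_box i j k : in_cells N i j k ->
  m0 <= rc1 i j k <= U /\ m0 <= r1 i j k <= U /\ m0 <= r0 i j k <= U.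
Proof.
  intros Hc. destruct (rc_box i j k Hc). pose proof (r1_box i j k Hc).
  assert (step := Rabs_le_inv _ _ (r_step i j k Hc)). unfold gsub in step.
  pose proof (mesh_step_le (Cs + 1) ltac:(lra)). pose proof Lh_le_m0.
  repeat split; lra.
Qed.

Lemma cell_steps i j k : in_cells N i j k ->
  Rabs (rc1 i j k - rc0 i j k) <= L * h /\ Rabs (r1 i j k - r0 i j k) <= L * h.
Proof.
  intros Hc. pose proof (rc_step i j k Hc); pose proof (r_step i j k Hc).
  unfold gsub in *.
  destruct (mesh_step_le Cs ltac:(lra)); destruct (mesh_step_le (Cs + 1) ltac:(lra)).
  split; lra.
Qed.

Lemma rhat_between i j k : in_cells N i j k ->
  3/4 * r1 i j k <= rhat i j k <= 5/4 * r1 i j k.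
Proof.
  intros Hc. destruct (rhat_ratio i j k Hc). pose proof (r1_box i j k Hc).
  replace (rhat i j k) with (rhat i j k / r1 i j k * r1 i j k) by (field; lra).
  split; apply Rmult_le_compat_r; lra.
Qed.

Lemma face_estimate_grid i1 j1 k1 i2 j2 k2 :
  Rabs ((ext N rc1 i2 j2 k2 - ext N rc1 i1 j1 k1) / h) <= Cs ->
  Rabs ((ext N rc0 i2 j2 k2 - ext N rc0 i1 j1 k1) / h) <= Cs ->
  Rabs ((ext N r1 i2 j2 k2 - ext N r1 i1 j1 k1) / h) <= Cs + 1 ->
  Rabs ((ext N r0 i2 j2 k2 - ext N r0 i1 j1 k1) / h) <= Cs + 1 ->
  (ext N rhat i2 j2 k2 + ext N rhat i1 j1 k1) / 2
    * ((ext N St i2 j2 k2 - ext N St i1 j1 k1) / h)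
    * ((ext N W i2 j2 k2 - ext N W i1 j1 k1) / h)
  >= 1/4 * ((ext N W i2 j2 k2 - ext N W i1 j1 k1) / h) ^ 2
     - face_const m0 U * L ^ 2 * (ext N V i1 j1 k1 + ext N V i2 j2 k2).
Proof.
  intros Grc1 Grc0 Gr1 Gr0.
  apply quotient_scaling; [exact h_gt0 |].
  assert (jump : forall c p q, 0 <= c <= Cs + 1 -> Rabs ((q - p) / h) <= c ->
                   Rabs (q - p) <= L * h).
  { intros c p q Hc. apply jump_le_of_quotient; auto. apply (mesh_step_le c Hc). }
  unfold ext in *.
  assert (Cp : in_cells N (clamp N i1) (clamp N j1) (clamp N k1))
    by (repeat split; apply clamp_in_range; auto).
  assert (Cq : in_cells N (clamp N i2) (clamp N j2) (clamp N k2))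
    by (repeat split; apply clamp_in_range; auto).
  destruct (cell_box _ _ _ Cp) as (? & ? & ?); destruct (cell_box _ _ _ Cq) as (? & ? & ?).
  destruct (cell_steps _ _ _ Cp); destruct (cell_steps _ _ _ Cq).
  pose proof (rhat_between _ _ _ Cp); pose proof (rhat_between _ _ _ Cq).
  unfold err_sq, gsub, gadd, Sfun.
  apply face_estimate; try lra; try (rewrite Rabs_minus_sym; assumption).
  - apply (jump Cs); [lra | exact Grc1].
  - apply (jump Cs); [lra | exact Grc0].
  - apply (jump (Cs + 1)); [lra | exact Gr1].
  - apply (jump (Cs + 1)); [lra | exact Gr0].
Qed.

Lemma x_face_estimate i j k : (i <= N)%nat -> (1 <= j <= N)%nat -> (1 <= k <= N)%nat ->
  gmul (gmul (Ax N rhat) (Defs.Dx N h St)) (Defs.Dx N h W) i j k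
  >= 1/4 * gmul (Defs.Dx N h W) (Defs.Dx N h W) i j k
     - face_const m0 U * L ^ 2 * (ext N V i j k + ext N V (S i) j k).
Proof.
  intros Hi Hj Hk. unfold gmul, Ax, Defs.Dx.
  eapply Rge_trans.
  - apply face_estimate_grid;
      [apply rc1_grad | apply rc0_grad | apply r1_grad | apply r0_grad]; auto.
  - apply Req_ge; ring.
Qed.

Lemma y_face_estimate i j k : (1 <= i <= N)%nat -> (j <= N)%nat -> (1 <= k <= N)%nat ->
  gmul (gmul (Ay N rhat) (Dy N h St)) (Dy N h W) i j k
  >= 1/4 * gmul (Dy N h W) (Dy N h W) i j k
     - face_const m0 U * L ^ 2 * (ext N V i j k + ext N V i (S j) k).
Proof.
  intros Hi Hj Hk. unfold gmul, Ay, Dy.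
  eapply Rge_trans.
  - apply face_estimate_grid;
      [apply rc1_grad | apply rc0_grad | apply r1_grad | apply r0_grad]; auto.
  - apply Req_ge; ring.
Qed.

Lemma z_face_estimate i j k : (1 <= i <= N)%nat -> (1 <= j <= N)%nat -> (k <= N)%nat ->
  gmul (gmul (Az N rhat) (Dz N h St)) (Dz N h W) i j k
  >= 1/4 * gmul (Dz N h W) (Dz N h W) i j k
     - face_const m0 U * L ^ 2 * (ext N V i j k + ext N V i j (S k)).
Proof.
  intros Hi Hj Hk. unfold gmul, Az, Dz.
  eapply Rge_trans.
  - apply face_estimate_grid;
      [apply rc1_grad | apply rc0_grad | apply r1_grad | apply r0_grad]; auto.
  - apply Req_ge; ring.
Qed.

Lemma cell_estimate i j k : in_cells N i j k ->
  flux_density N h rhat St W i j k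
  >= 1/4 * grad_density N h W i j k
     - face_const m0 U * L ^ 2 / 2 * neighbour_sum N V i j k.
Proof.
  intros (Hi & Hj & Hk).
  pose proof (x_face_estimate i j k ltac:(lia) Hj Hk).
  pose proof (x_face_estimate (pred i) j k ltac:(lia) Hj Hk).
  pose proof (y_face_estimate i j k Hi ltac:(lia) Hk).
  pose proof (y_face_estimate i (pred j) k Hi ltac:(lia) Hk).
  pose proof (z_face_estimate i j k Hi Hj ltac:(lia)).
  pose proof (z_face_estimate i j (pred k) Hi Hj ltac:(lia)).
  unfold flux_density, grad_density, neighbour_sum, ax, ay, az. lra.
Qed.

Lemma bracketD_lower_bound :
  bracketD N h rhat St W
  >= 1/4 * gradnorm2sq N h W
     - 48 * (face_const m0 U * L ^ 2)
       * (norm2sq N h (gsub rc1 r1) + norm2sq N h (gsub rc0 r0)).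
Proof.
  set (K := face_const m0 U * L ^ 2).
  assert (EB : bracketD N h rhat St W = h ^ 3 * sum3 N (flux_density N h rhat St W)).
  { transitivity (h ^ 3 * sum3 N (fun i j k => flux_density N h rhat St W i j k * 1));
      [reflexivity | f_equal; apply sum3_ext; intros; ring]. }
  assert (EG : gradnorm2sq N h W = h ^ 3 * sum3 N (grad_density N h W)).
  { transitivity (h ^ 3 * sum3 N (fun i j k => grad_density N h W i j k * 1));
      [reflexivity | f_equal; apply sum3_ext; intros; ring]. }
  assert (EV : norm2sq N h (gsub rc1 r1) + norm2sq N h (gsub rc0 r0)
               = h ^ 3 * sum3 N V).
  { unfold norm2sq, inner. rewrite <- Rmult_plus_distr_l. f_equal.
    fold (sum3 N (fun i j k => gsub rc1 r1 i j k * gsub rc1 r1 i j k)).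
    fold (sum3 N (fun i j k => gsub rc0 r0 i j k * gsub rc0 r0 i j k)).
    rewrite <- sum3_plus. apply sum3_ext; intros. unfold err_sq, gsub. ring. }
  assert (V_ge0 : forall i j k, 0 <= V i j k).
  { intros. unfold err_sq. pose proof (pow2_ge_0 (rc1 i j k - r1 i j k)).
    pose proof (pow2_ge_0 (rc0 i j k - r0 i j k)). lra. }
  assert (Hsum : sum3 N (fun i j k => 1/4 * grad_density N h W i j k
                                      + - (K / 2) * neighbour_sum N V i j k)
                 <= sum3 N (flux_density N h rhat St W)).
  { apply sum3_le. intros i j k Hc. pose proof (cell_estimate i j k Hc) as Hcell. fold K in Hcell. lra. }
  rewrite sum3_plus, !sum3_scal in Hsum.
  assert (K * sum3 N (neighbour_sum N V) <= K * (96 * sum3 N V)).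
  { apply Rmult_le_compat_l; [| exact (sum3_neighbour_sum_le N V N_ge1 V_ge0)].
    left; apply Rmult_lt_0_compat; [apply face_const_pos; lra | nra]. }
  assert (Hcell_sum : 1/4 * sum3 N (grad_density N h W) - 48 * K * sum3 N V
                      <= sum3 N (flux_density N h rhat St W)) by lra.
  rewrite EB, EG, EV. apply Rle_ge.
  apply (Rmult_le_compat_l (h ^ 3)) in Hcell_sum; [lra |].
  apply pow_le; lra.
Qed.

End GridEstimate.

Theorem mainTheorem9 (a b : R) (hab : a < b)
  (gamma eps Cs lam1 lam2 : R)
  (Hg : 0 < gamma) (He : 0 < eps) (HC : 0 < Cs) (Hl1 : 0 < lam1) (Hl2 : 0 < lam2) :
  exists C1 M1 h0 : R, 0 < C1 /\ 0 < M1 /\ 0 < h0 /\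
  forall (N : nat) (dt : R) (rc0 rc1 r0 r1 rhat : grid),
    (1 <= N)%nat ->
    hN a b N <= h0 ->
    lam1 * hN a b N <= dt <= lam2 * hN a b N ->
    (* (a) *)
    (forall i j k, in_cells N i j k ->
       eps <= rc0 i j k <= Cs /\ eps <= rc1 i j k <= Cs) ->
    gradinf_le N (hN a b N) rc0 Cs ->
    gradinf_le N (hN a b N) rc1 Cs ->
    maxnorm_le N (gsub rc1 rc0) (Cs * dt) ->
    gradinf_le N (hN a b N) (gsub rc1 rc0) (Cs * dt) ->
    (* (b) *)
    (forall i j k, in_cells N i j k ->
       eps / 2 <= r1 i j k <= Cs + eps / 2 /\ 0 < r0 i j k) ->
    gradinf_le N (hN a b N) r0 (Cs + 1) ->
    gradinf_le N (hN a b N) r1 (Cs + 1) ->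
    maxnorm_le N (gsub r1 r0) ((Cs + 1) * dt) ->
    (* (c) *)
    (forall i j k, in_cells N i j k ->
       eps / 2 <= rhat i j k <= Cs + eps / 2 /\
       3 / 4 <= rhat i j k / r1 i j k <= 5 / 4) ->
    gamma * bracketD N (hN a b N) rhat
              (gsub (Sfun rc1 rc0) (Sfun r1 r0))
              (gadd (gsub rc1 r1) (gsub rc0 r0))
    >= gamma / 4 * gradnorm2sq N (hN a b N) (gadd (gsub rc1 r1) (gsub rc0 r0))
       - C1 * (norm2sq N (hN a b N) (gsub rc1 r1) + norm2sq N (hN a b N) (gsub rc0 r0))
       - M1 * (hN a b N) ^ 8.
Proof.
  set (m0 := eps / 4); set (U := Cs + eps); set (L := (Cs + 1) * (lam2 + 1)).
  set (K := face_const m0 U * L ^ 2).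
  assert (HL : 0 < L) by (unfold L; nra).
  assert (Hm0U : 0 < m0 + U) by (unfold m0, U; lra).
  assert (HmU : 0 < 32 * L * (m0 + U)) by nra.
  assert (HK : 0 < K)
    by (apply Rmult_lt_0_compat; [apply face_const_pos; unfold m0; lra | nra]).
  exists (48 * gamma * K), 1, (m0 ^ 2 / (32 * L * (m0 + U))).
  split; [nra | split; [lra | split; [apply Rdiv_lt_0_compat; unfold m0 in *; nra |]]].
  intros N dt rc0 rc1 r0 r1 rhat HN Hh0 Hdt Hrc Grc0 Grc1 Src _ Hr Gr0 Gr1 Sr Hhat.
  set (h := hN a b N) in *.
  assert (Hh : 0 < h)
    by (unfold h, hN; apply Rdiv_lt_0_compat; [lra | apply lt_0_INR; lia]).
  assert (h_small : 32 * (L * h) * (m0 + U) <= m0 ^ 2).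
  { apply (Rmult_le_compat_l (32 * L * (m0 + U))) in Hh0; [| lra].
    replace (32 * L * (m0 + U) * (m0 ^ 2 / (32 * L * (m0 + U)))) with (m0 ^ 2)
      in Hh0 by (field; lra).
    lra. }
  assert (dt_range : 0 <= dt <= lam2 * h).
  { pose proof (Rmult_le_pos lam1 h ltac:(lra) ltac:(lra)). lra. }
  pose proof (bracketD_lower_bound N h dt eps Cs lam2 rc0 rc1 r0 r1 rhat HN He HC Hl2 Hh
    dt_range h_small Hrc Grc0 Grc1 Src (fun i j k H => proj1 (Hr i j k H)) Gr0 Gr1 Sr
    (fun i j k H => proj2 (Hhat i j k H))) as Hbr.
  fold m0 U L K in Hbr. apply Rge_le in Hbr.
  apply (Rmult_le_compat_l gamma) in Hbr; [| lra].
  pose proof (pow_le h 8 ltac:(lra)). lra.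
Qed.
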